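(* Let $K\subset K'$ be compact and connected subgroups of $U(N)$ and let $A\in\mathbb{C}^{N\times N}$. (a) $W_K(C,A)$ is rotationally symmetric for all $C\in\mathbb{C}^{N\times N}$ if and only if the orbit $\mathcal{O}_K(A)$ is weakly rotationally symmetric. (b) If $W_K(C,A)$ is rotationally symmetric for all $C\in\mathbb{C}^{N\times N}$, then $W_{K'}(C,A)$ is rotationally symmetric for all $C\in\mathbb{C}^{N\times N}$.
   Context: For a compact connected subgroup $K\subset U(N)$ and $C,A\in\mathbb{C}^{N\times N}$: $W_K(C,A)=\{\mathrm{tr}(C^\dagger UAU^\dagger)\mid U\in K\}$ and $\mathcal{O}_K(A)=\{UAU^\dagger\mid U\in K\}$. A subset $W\subset\mathbb{C}$ is rotationally symmetric if $e^{i\varphi}W=W$ for all $\varphi\in\mathbb{R}$; the orbit $\mathcal{O}_K(A)$ is weakly rotationally symmetric if $e^{i\varphi}\mathcal{O}_K(A)=\mathcal{O}_K(A)$ for all $\varphi\in\mathbb{R}$. *)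

From HB Require Import structures.
From mathcomp Require Import all_boot all_order all_algebra.
From mathcomp Require Import all_classical all_reals all_analysis.
From mathcomp Require Import complex.
Import numFieldNormedType.Exports.

Set Implicit Arguments.
Unset Strict Implicit.
Unset Printing Implicit Defensive.

Local Open Scope ring_scope.
Local Open Scope classical_set_scope.

(* The standard (norm) topology on C = R[i]: |z| = sqrt (Re z ^2 + Im z ^2).
   Matrices 'M[R[i]]_N then carry the product (= Euclidean) topology. *)
#[non_forgetful_inheritance]
HB.instance Definition _ (R : rcfType) :=
  PseudoPointedMetric.copy (complex R) (complex R)^o.

Definition adjmx (R : rcfType) (N : nat) (A : 'M[R[i]]_N) : 'M[R[i]]_N :=
  (map_mx Num.conj A)^T.

Definition unitary_group (R : rcfType) (N : nat) : set 'M[R[i]]_N :=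
  [set U | U *m adjmx U = 1%:M].

Definition compact_connected_subgroup_U (R : rcfType) (N : nat)
    (K : set 'M[R[i]]_N) : Prop :=
  [/\ K `<=` @unitary_group R N,
      K 1%:M,
      (forall U V, K U -> K V -> K (U *m V)),
      (forall U, K U -> K (adjmx U))   (* inverse of a unitary is its adjoint *)
    & compact K /\ connected K].

Definition expi (R : realType) (phi : R) : R[i] := (cos phi +i* sin phi)%C.

Definition W_K (R : rcfType) (N : nat) (K : set 'M[R[i]]_N)
    (C A : 'M[R[i]]_N) : set R[i] :=
  [set \tr (adjmx C *m (U *m A *m adjmx U)) | U in K].

Definition orbit_K (R : rcfType) (N : nat) (K : set 'M[R[i]]_N)
    (A : 'M[R[i]]_N) : set 'M[R[i]]_N :=
  [set U *m A *m adjmx U | U in K].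

Definition rot_sym (R : realType) (W : set R[i]) : Prop :=
  forall phi : R, [set expi phi * w | w in W] = W.

Definition weak_rot_sym (R : realType) (N : nat) (O : set 'M[R[i]]_N) : Prop :=
  forall phi : R, [set expi phi *: M | M in O] = O.

From HB Require Import structures.
From mathcomp Require Import all_boot all_order all_algebra.
From mathcomp Require Import all_classical all_reals all_analysis.
From mathcomp Require Import complex.
Local Open Scope ring_scope.
Local Open Scope classical_set_scope.
Import GRing.Theory Num.Theory.

(* W_K(C, A) is the set of Frobenius inner products <C, M> with M in the
   orbit O_K(A).  If W_K(C, A) is rotationally symmetric for every C, take
   M = U A U^dagger and C = e M with |e| = 1: then <C, M> = e^* |M|^2, so
   |M|^2 lies in W_K(C, A), i.e. <C, X> = |M|^2 for some X in the orbit.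
   Since |X| = |A| = |M| = |C|, this is the equality case of Cauchy-Schwarz
   and forces X = C = e M.  Conversely a rotation of the orbit rotates every
   W_K(C, A) by linearity of the trace.  For (b), e A = U A U^dagger with
   U in K, so V (e A) V^dagger = (V U) A (V U)^dagger for every V in K'. *)

Section Frobenius.
Context {R : rcfType} {N : nat}.
Implicit Types (X Y U : 'M[R[i]]_N) (a : R[i]).

Definition mxdot X Y := \tr (adjmx X *m Y).

Lemma adjmxM X Y : adjmx (X *m Y) = adjmx Y *m adjmx X.
Proof. by rewrite /adjmx map_mxM trmx_mul. Qed.

Lemma adjmxK X : adjmx (adjmx X) = X.
Proof. by apply/matrixP => i j; rewrite /adjmx !mxE conjCK. Qed.

Lemma adjmxB X Y : adjmx (X - Y) = adjmx X - adjmx Y.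
Proof. by rewrite /adjmx map_mxB linearB. Qed.

Lemma adjmxZ a X : adjmx (a *: X) = a^* *: adjmx X.
Proof. by rewrite /adjmx map_mxZ linearZ. Qed.

Lemma adjmx1 : adjmx (1%:M : 'M[R[i]]_N) = 1%:M.
Proof. by rewrite /adjmx map_mx1 trmx1. Qed.

Lemma mxdotE X Y : mxdot X Y = \sum_i \sum_j (X j i)^* * Y j i.
Proof.
apply: eq_bigr => i _; rewrite mxE.
by apply: eq_bigr => j _; rewrite /adjmx !mxE.
Qed.

Lemma mxdotC X Y : (mxdot X Y)^* = mxdot Y X.
Proof.
rewrite !mxdotE rmorph_sum; apply: eq_bigr => i _.
rewrite rmorph_sum; apply: eq_bigr => j _.
by rewrite rmorphM /= conjCK mulrC.
Qed.

Lemma mxdotZr a X Y : mxdot X (a *: Y) = a * mxdot X Y.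
Proof. by rewrite /mxdot -scalemxAr mxtraceZ. Qed.

Lemma mxdotZl a X Y : mxdot (a *: X) Y = a^* * mxdot X Y.
Proof. by rewrite /mxdot adjmxZ -scalemxAl mxtraceZ. Qed.

Lemma mxdotBB X Y :
  mxdot (X - Y) (X - Y) = mxdot X X - mxdot X Y - mxdot Y X + mxdot Y Y.
Proof. by rewrite /mxdot adjmxB mulmxBl !mulmxBr !raddfB /= opprK addrA. Qed.

Lemma mxdot_selfE X : mxdot X X = \sum_i \sum_j `|X j i| ^+ 2.
Proof.
rewrite mxdotE; apply: eq_bigr => i _.
by apply: eq_bigr => j _; rewrite normCKC.
Qed.

Lemma mxdot_self_ge0 X : 0 <= mxdot X X.
Proof.
rewrite mxdot_selfE; apply: sumr_ge0 => i _.
by apply: sumr_ge0 => j _; rewrite exprn_ge0.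
Qed.

Lemma mxdot_self_eq0 X : mxdot X X = 0 -> X = 0.
Proof.
rewrite mxdot_selfE => X0; apply/matrixP => j i; rewrite mxE.
have col0 : \sum_j `|X j i| ^+ 2 = 0.
  by apply: (psumr_eq0P _ X0) => // k _; apply: sumr_ge0.
have /eqP := psumr_eq0P (fun k _ => exprn_ge0 2 (normr_ge0 (X k i))) col0
  (i := j) isT.
by rewrite expf_eq0 /= normr_eq0 => /eqP.
Qed.

(* Equality case of Cauchy-Schwarz: |X - Y|^2 = |X|^2 - 2 Re <Y, X> + |Y|^2 = 0. *)
Lemma mxdot_eq_norms X Y :
  mxdot X X = mxdot Y Y -> mxdot Y X = mxdot X X -> X = Y.
Proof.
move=> eqXY eqYX; have eqXY' : mxdot X Y = mxdot X X.
  by rewrite -mxdotC eqYX geC0_conj // mxdot_self_ge0.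
apply: subr0_eq; apply: mxdot_self_eq0.
by rewrite mxdotBB eqXY' eqYX -eqXY subrr sub0r addNr.
Qed.

Lemma mxdot_conj_unitary U X Y : unitary_group U ->
  mxdot (U *m X *m adjmx U) (U *m Y *m adjmx U) = mxdot X Y.
Proof.
move=> /mulmx1C UU1; rewrite /mxdot !adjmxM adjmxK.
rewrite -!mulmxA (mulmxA (adjmx U) U) UU1 mul1mx.
by rewrite mxtrace_mulC -!mulmxA UU1 mulmx1.
Qed.

End Frobenius.

Section Rotations.
Context {R : realType}.

Lemma conj_expi (phi : R) : (expi phi)^* = expi (- phi).
Proof. by apply/eqP; rewrite eq_complex /= cosN sinN !eqxx. Qed.

Lemma expi_mulCr (phi : R) : expi phi * (expi phi)^* = 1.
Proof. by rewrite -normCK normc_def /= cos2Dsin2 sqrtr1 expr1n. Qed.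

Lemma expi_mulCl (phi : R) : (expi phi)^* * expi phi = 1.
Proof. by rewrite mulrC expi_mulCr. Qed.

Lemma invariant_imageP (T : Type) (f : R -> T -> T) (S : set T) :
  (forall phi x, f phi (f (- phi) x) = x) ->
  (forall phi, f phi @` S = S) <-> (forall phi x, S x -> S (f phi x)).
Proof.
move=> fK; split=> [fS phi x Sx | Sf phi].
  by rewrite -(fS phi); exists x.
apply/seteqP; split=> [_ [x Sx <-] | x Sx]; first exact: Sf.
by exists (f (- phi) x); [exact: Sf | exact: fK].
Qed.

Lemma rot_symP (W : set R[i]) :
  rot_sym W <-> forall phi w, W w -> W (expi phi * w).
Proof.
apply: (@invariant_imageP _ (fun phi w => expi phi * w) W) => phi w.
by rewrite mulrA -conj_expi expi_mulCr mul1r.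
Qed.

Lemma weak_rot_symP (N : nat) (O : set 'M[R[i]]_N) :
  weak_rot_sym O <-> forall phi M, O M -> O (expi phi *: M).
Proof.
apply: (@invariant_imageP _ (fun phi M => expi phi *: M) O) => phi M.
by rewrite scalerA -conj_expi expi_mulCr scale1r.
Qed.

End Rotations.

Section Orbits.
Context {R : realType} {N : nat}.
Variables (K : set 'M[R[i]]_N) (A : 'M[R[i]]_N).

Lemma W_KE C : W_K K C A = mxdot C @` orbit_K K A.
Proof. by rewrite /orbit_K image_comp. Qed.

Lemma rot_sym_W_orbit C :
  weak_rot_sym (orbit_K K A) -> rot_sym (W_K K C A).
Proof.
move=> /weak_rot_symP Orot; rewrite W_KE; apply/rot_symP => phi _ [M OM <-].
by exists (expi phi *: M); [exact: Orot | rewrite mxdotZr].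
Qed.

Hypothesis K_unitary : K `<=` @unitary_group R N.

Lemma mxdot_orbit M : orbit_K K A M -> mxdot M M = mxdot A A.
Proof. by case=> U KU <-; apply/mxdot_conj_unitary/K_unitary. Qed.

Lemma weak_rot_sym_orbit_W :
  (forall C, rot_sym (W_K K C A)) -> weak_rot_sym (orbit_K K A).
Proof.
move=> Wrot; apply/weak_rot_symP => phi M OM.
have normC : mxdot (expi phi *: M) (expi phi *: M) = mxdot M M.
  by rewrite mxdotZl mxdotZr mulrA expi_mulCl mul1r.
have W_CM : W_K K (expi phi *: M) A (mxdot (expi phi *: M) M).
  by rewrite W_KE; exists M.
have := (rot_symP _).1 (Wrot (expi phi *: M)) phi _ W_CM.
rewrite mxdotZl mulrA expi_mulCr mul1r W_KE => -[X OX CX].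
suff <- : X = expi phi *: M by [].
apply: mxdot_eq_norms.
  by rewrite normC (mxdot_orbit _ OX) (mxdot_orbit _ OM).
by rewrite CX (mxdot_orbit _ OX) (mxdot_orbit _ OM).
Qed.

End Orbits.

Lemma weak_rot_sym_orbit_sub {R : realType} {N : nat}
    {K K' : set 'M[R[i]]_N} {A : 'M[R[i]]_N} :
  K 1%:M -> K `<=` K' -> (forall U V, K' U -> K' V -> K' (U *m V)) ->
  weak_rot_sym (orbit_K K A) -> weak_rot_sym (orbit_K K' A).
Proof.
move=> K1 KK' K'M /weak_rot_symP Orot; apply/weak_rot_symP => phi _ [V K'V <-].
have [U KU UAU] : orbit_K K A (expi phi *: A).
  by apply: Orot; exists 1%:M; rewrite // adjmx1 mul1mx mulmx1.
exists (V *m U); first by apply: K'M; last exact: KK'.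
by rewrite scalemxAl scalemxAr -UAU adjmxM !mulmxA.
Qed.

Theorem corollary2p14 (R : realType) (N : nat) (K K' : set 'M[R[i]]_N)
    (A : 'M[R[i]]_N) :
  compact_connected_subgroup_U K ->
  compact_connected_subgroup_U K' ->
  K `<=` K' ->
  ((forall C : 'M[R[i]]_N, rot_sym (W_K K C A)) <-> weak_rot_sym (orbit_K K A))
  /\
  ((forall C : 'M[R[i]]_N, rot_sym (W_K K C A)) ->
     forall C : 'M[R[i]]_N, rot_sym (W_K K' C A)).
Proof.
move=> [K_unitary K1 _ _ _] [_ _ K'M _ _] KK'.
have orbit_of_W := weak_rot_sym_orbit_W _ A K_unitary.
split; first by split; [exact: orbit_of_W | move=> Orot C; exact: rot_sym_W_orbit].
move=> /orbit_of_W Orot C; apply: rot_sym_W_orbit.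
exact: weak_rot_sym_orbit_sub K1 KK' K'M Orot.
Qed.
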